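(* An abstract $b$-flip $f$ is non ambiguous if and only if (a) it is a sliding flip, and (b) for every oriented $(S,V)$ and every application of $f$ to a branched ideal triangulation $(T,b)$ of $(S,V)$ producing $(T',b')$, one has $S_\pm(T,b)=S_\pm(T',b')$. In that case the boundary $1$-cycles $\partial S_\pm$ are also preserved.
   Context: $(S,V)$: a closed surface with finite set of marked points, $\chi(S)-|V|<0$. A branching $b$ of an ideal triangulation (vertex set $V$) orients edges so that on each abstract triangle the orientations are induced by a total order $v_0<v_1<v_2$ of its vertices, edges pointing to the larger endpoint. An abstract $b$-flip acts on a quadrilateral $Q=t_1\cup t_2$ with diagonal $e$. It replaces $e$ by the other diagonal $e'$, oriented so that the result is branched with boundary edges of $Q$ unchanged. It is forced if it is the unique branched enhancement of the naked flip starting from $(t_1\cup t_2,b)$. It is non ambiguous if both it and its inverse $b$-flip are forced. It is a sliding flip if at least one of it and its inverse is forced. When $S$ is oriented, for a branched triangle $t$ set $*_{(t,b)}=+1$ if the orientation of $t$ given by $(v_0,v_1,v_2)$ agrees with that of $S$ and $-1$ otherwise. $S_\pm(T,b)$ is the union of the triangles with $*_{(t,b)}=\pm1$, so $S=S_+\cup S_-$, and $\partial S_\pm$ is the boundary $1$-cycle of the simplicial $2$-chain supported by $S_\pm$. *)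

From mathcomp Require Import all_boot all_order all_algebra all_fingroup.
Set Implicit Arguments. Unset Strict Implicit. Unset Printing Implicit Defensive.

(* Branched triangles: a triangle with vertices p q r (in a vertex type V)
   whose edges are oriented by the relation a (a x y = "edge x->y").
   It is branched iff the orientations are induced by a total order
   u0 < u1 < u2 of its vertices (edges pointing to the larger endpoint). *)
Definition induced {V : Type} (a : rel V) (u0 u1 u2 : V) : bool :=
  [&& a u0 u1, a u1 u2 & a u0 u2].

Definition tri_branched {V : Type} (a : rel V) (p q r : V) : bool :=
  [|| induced a p q r, induced a p r q, induced a q p r,
      induced a q r p, induced a r p q | induced a r q p].

(* Abstract quadrilateral: vertices 0,1,2,3 in cyclic order; boundary side i
   joins i and i+1 (mod 4); diagonal e = {0,2}, other diagonal e' = {1,3}.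
   t1 = (0,1,2), t2 = (0,2,3); after the flip (0,1,3), (1,2,3). *)
Definition q0 : 'I_4 := inord 0.
Definition q1 : 'I_4 := inord 1.
Definition q2 : 'I_4 := inord 2.
Definition q3 : 'I_4 := inord 3.

(* bd i = true iff boundary side i is oriented i -> i+1 *)
Definition bd_arr (bd : 'I_4 -> bool) (i j : 'I_4) : bool :=
  ((j == ordS i) && bd i) || ((i == ordS j) && ~~ bd j).

(* d = true iff e is oriented 0 -> 2 *)
Definition qarr_before (bd : 'I_4 -> bool) (d : bool) : rel 'I_4 :=
  fun i j => [|| bd_arr bd i j, [&& i == q0, j == q2 & d] | [&& i == q2, j == q0 & ~~ d]].

(* d' = true iff e' is oriented 1 -> 3 *)
Definition qarr_after (bd : 'I_4 -> bool) (d' : bool) : rel 'I_4 :=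
  fun i j => [|| bd_arr bd i j, [&& i == q1, j == q3 & d'] | [&& i == q3, j == q1 & ~~ d']].

Definition branched_before (bd : 'I_4 -> bool) (d : bool) : bool :=
  tri_branched (qarr_before bd d) q0 q1 q2 && tri_branched (qarr_before bd d) q0 q2 q3.

Definition branched_after (bd : 'I_4 -> bool) (d' : bool) : bool :=
  tri_branched (qarr_after bd d') q0 q1 q3 && tri_branched (qarr_after bd d') q1 q2 q3.

(* An abstract b-flip: boundary orientations (unchanged), orientation of e
   before and of e' after. *)
Record bflip := BFlip { fbd : 'I_4 -> bool; fd : bool; fd' : bool }.

Definition is_bflip (f : bflip) : Prop :=
  branched_before (fbd f) (fd f) /\ branched_after (fbd f) (fd' f).

Definition forced (f : bflip) : Prop :=
  forall x : bool, branched_after (fbd f) x -> x = fd' f.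

Definition inv_forced (f : bflip) : Prop :=
  forall x : bool, branched_before (fbd f) x -> x = fd f.

Definition non_ambiguous (f : bflip) : Prop := forced f /\ inv_forced f.
Definition sliding (f : bflip) : Prop := forced f \/ inv_forced f.

(* Triangles form a finType T; corners of each triangle are 'I_3, listed in the
   cyclic order given by the orientation of S.  Side k of t joins corner k to
   corner k+1.  opp glues sides pairwise; gluings are orientation reversing:
   if opp (t,k) = (t',k') then corner k of t goes to corner k'+1 of t' and
   corner k+1 of t to corner k' of t'. *)
Definition is_osurface (T : finType) (opp : T * 'I_3 -> T * 'I_3) : Prop :=
  [/\ involutive opp,
      (forall s, opp s != s) &
      (forall t u : T, connect (fun x y => [exists k : 'I_3, (opp (x, k)).1 == y]) t u)].

(* arrows between corners of one triangle; bs k = true iff side k is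
   oriented from corner k to corner k+1 *)
Definition sarr (bs : 'I_3 -> bool) : rel 'I_3 :=
  fun i j => ((j == ordS i) && bs i) || ((i == ordS j) && ~~ bs j).

Definition c0 : 'I_3 := inord 0.
Definition c1 : 'I_3 := inord 1.
Definition c2 : 'I_3 := inord 2.

Definition is_branching (T : finType) (opp : T * 'I_3 -> T * 'I_3)
    (bo : T * 'I_3 -> bool) : Prop :=
  (forall s, bo (opp s) = ~~ bo s) /\
  (forall t, tri_branched (sarr (fun k => bo (t, k))) c0 c1 c2).

(* *_(t,b) = +1 : the order (v0,v1,v2) is a cyclic rotation of (0,1,2), i.e.
   it agrees with the orientation of S *)
Definition star_pos (T : finType) (bo : T * 'I_3 -> bool) (t : T) : bool :=
  let a := sarr (fun k => bo (t, k)) in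
  [|| induced a c0 c1 c2, induced a c1 c2 c0 | induced a c2 c0 c1].

(* Application of a flip at the edge e = side (t1,k1) glued to (t2,k2).
   Real quadrilateral positions R0..R3 (positive cyclic order):
   R0 = corner k1 of t1, R2 = corner k1+1 of t1, R3 = corner k1+2 of t1,
   R1 = corner k2+2 of t2.  Real side i joins R_i and R_{i+1}. *)
Section Application.
Variables (T : finType) (opp : T * 'I_3 -> T * 'I_3) (t1 : T) (k1 : 'I_3).

Definition t2 := (opp (t1, k1)).1.
Definition k2 := (opp (t1, k1)).2.

(* the surface side carrying real quadrilateral side i, oriented R_i -> R_{i+1} *)
Definition qside (i : 'I_4) : T * 'I_3 :=
  match val i with
  | 0 => (t2, ordS k2)
  | 1 => (t2, ordS (ordS k2))
  | 2 => (t1, ordS k1)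
  | _ => (t1, ordS (ordS k1))
  end.

Variable bo : T * 'I_3 -> bool.

Definition rbd (i : 'I_4) : bool := bo (qside i).
Definition rd : bool := bo (t1, k1).   (* R0 -> R2 *)

(* branching b' of T' (rd' = true iff the new diagonal is R1 -> R3).
   In T', t1 becomes t1' = (R3,R0,R1) and t2 becomes t2' = (R1,R2,R3),
   corners in positive order. *)
Definition flip_bo (rd' : bool) (s : T * 'I_3) : bool :=
  if s.1 == t1 then
    (match val s.2 with 0 => rbd q3 | 1 => rbd q0 | _ => rd' end)
  else if s.1 == t2 then
    (match val s.2 with 0 => rbd q1 | 1 => rbd q2 | _ => ~~ rd' end)
  else bo s.

(* Common refinement of T and T' : triangles outside Q, plus the four
   quarters of Q cut out by both diagonals (quarter i is adjacent to real
   side i).  S_pm are compared as unions of cells. *)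
Definition cell := (T + 'I_4)%type.
Definition valid_cell (c : cell) : bool :=
  match c with inl t => (t != t1) && (t != t2) | inr _ => true end.

(* S_+(T,b) : t1 = (R0,R2,R3) contains quarters 2,3; t2 = (R2,R0,R1) contains 0,1 *)
Definition Splus_T (c : cell) : bool :=
  match c with
  | inl t => star_pos bo t
  | inr i => if (i == q2) || (i == q3) then star_pos bo t1 else star_pos bo t2
  end.

(* S_+(T',b') : t1' contains quarters 3,0; t2' contains 1,2 *)
Definition Splus_T' (rd' : bool) (c : cell) : bool :=
  match c with
  | inl t => star_pos (flip_bo rd') t
  | inr i => if (i == q3) || (i == q0) then star_pos (flip_bo rd') t1
             else star_pos (flip_bo rd') t2
  end.

Definition Sminus_T (c : cell) : bool := ~~ Splus_T c.
Definition Sminus_T' (rd' : bool) (c : cell) : bool := ~~ Splus_T' rd' c.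

(* the cell on the other side of a surface side lying on the boundary of a cell *)
Definition cell_of_side (s : T * 'I_3) : cell :=
  if s.1 == t1 then inr (if s.2 == ordS k1 then q2 else q3)
  else if s.1 == t2 then inr (if s.2 == ordS k2 then q0 else q1)
  else inl s.1.

(* neighbour of cell c across its side k.  A quarter has side 0 = its real
   quadrilateral side, sides 1,2 = half-diagonals towards quarters i-1, i+1. *)
Definition nb (c : cell) (k : 'I_3) : cell :=
  match c with
  | inl t => cell_of_side (opp (t, k))
  | inr i => match val k with
             | 0 => cell_of_side (opp (qside i))
             | 1 => inr (ord_pred i)
             | _ => inr (ordS i)
             end
  end.

(* boundary 1-cycle of the 2-chain supported by R (triangles oriented by S):
   coefficient on the edge at side k of cell c, oriented as boundary of c *)
Definition bnd (R : cell -> bool) (c : cell) (k : 'I_3) : int :=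
  ((R c : nat)%:Z - (R (nb c k) : nat)%:Z)%R.

End Application.

(* An application of the abstract b-flip f to (T,b) at the side (t1,k1):
   an identification phi of the abstract quadrilateral with the real one
   transporting the branching of f before the flip to b, and rd' the
   resulting orientation of the new diagonal (transporting f after). *)
Definition application (f : bflip) (T : finType) (opp : T * 'I_3 -> T * 'I_3)
    (bo : T * 'I_3 -> bool) (t1 : T) (k1 : 'I_3) (phi : {perm 'I_4}) (rd' : bool) : Prop :=
  [/\ t1 != t2 opp t1 k1,
      (forall i j, qarr_before (fbd f) (fd f) i j =
                   qarr_before (rbd opp t1 k1 bo) (rd t1 k1 bo) (phi i) (phi j)) &
      (forall i j, qarr_after (fbd f) (fd' f) i j =
                   qarr_after (rbd opp t1 k1 bo) rd' (phi i) (phi j))].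

(* The four triangles of the quadrilateral Q (two before, two after the flip)
   each carry a *-sign.  Call a branched flip COHERENT when these four signs
   agree.  The proof rests on three facts.
   - Abstractly, a branched flip is non ambiguous iff it is coherent (a finite
     check over the orientations of Q); in particular coherent flips are
     sliding.
   - Coherence is invariant under applications: an identification phi of
     the abstract with the real quadrilateral preserves the graphs of both
     triangulations of Q, hence is one of the four symmetries of the square
     fixing each diagonal; the half-turn keeps every sign and a reflection
     flips every sign of a branched triangle, so agreement is kept.
   - On a surface, the flip keeps S_+ on the common refinement of T and T'
     iff the real quadrilateral is coherent: outside Q nothing changes and
     each quarter of Q lies in one old and one new triangle.
   Necessity of coherence is witnessed on the double of Q, a sphere made of
   Q and its mirror image, on which every branched flip can be applied. *)

From mathcomp Require Import all_boot all_order all_algebra all_fingroup.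
Set Implicit Arguments. Unset Strict Implicit. Unset Printing Implicit Defensive.

(* The vertex names q_i, c_i are built with inord, which does not compute;
   these equations expose them as literal ordinals, so that finite case
   analyses over orientations can be closed by evaluation. *)
Lemma q0E : q0 = Ordinal (isT : 0 < 4). Proof. by apply: val_inj; rewrite /= inordK. Qed.
Lemma q1E : q1 = Ordinal (isT : 1 < 4). Proof. by apply: val_inj; rewrite /= inordK. Qed.
Lemma q2E : q2 = Ordinal (isT : 2 < 4). Proof. by apply: val_inj; rewrite /= inordK. Qed.
Lemma q3E : q3 = Ordinal (isT : 3 < 4). Proof. by apply: val_inj; rewrite /= inordK. Qed.
Lemma c0E : c0 = Ordinal (isT : 0 < 3). Proof. by apply: val_inj; rewrite /= inordK. Qed.
Lemma c1E : c1 = Ordinal (isT : 1 < 3). Proof. by apply: val_inj; rewrite /= inordK. Qed.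
Lemma c2E : c2 = Ordinal (isT : 2 < 3). Proof. by apply: val_inj; rewrite /= inordK. Qed.
Definition qE := (q0E, q1E, q2E, q3E).
Definition cE := (c0E, c1E, c2E).

Lemma ord4_cases (i : 'I_4) : [\/ i = q0, i = q1, i = q2 | i = q3].
Proof.
rewrite !qE; case: i => -[|[|[|[|n]]]] lt_i4 //.
- by constructor 1; apply: val_inj.
- by constructor 2; apply: val_inj.
- by constructor 3; apply: val_inj.
- by constructor 4; apply: val_inj.
Qed.

Lemma ord3_cases (k : 'I_3) : [\/ k = c0, k = c1 | k = c2].
Proof.
rewrite !cE; case: k => -[|[|[|n]]] lt_k3 //.
- by constructor 1; apply: val_inj.
- by constructor 2; apply: val_inj.
- by constructor 3; apply: val_inj.
Qed.

Lemma ordS_corners : (ordS c0 = c1) * (ordS c1 = c2) * (ordS c2 = c0).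
Proof. by rewrite !cE; do ![split]; apply: val_inj. Qed.

(* Describe a triangle by the orientations a, b, c of
   its sides taken in the positive cyclic order (true = along that order).
   It is branched iff not all three agree, and its *-sign is +1 iff exactly
   two of them are positive. *)
Definition sign3 (a b c : bool) : bool := [|| a && b && ~~ c, b && c && ~~ a | c && a && ~~ b].

Lemma sign3_rot (a b c : bool) : sign3 a b c = sign3 b c a.
Proof. by case: a; case: b; case: c. Qed.

Lemma star_pos_sides (T : finType) (bo : T * 'I_3 -> bool) (t : T) (k : 'I_3) :
  star_pos bo t = sign3 (bo (t, k)) (bo (t, ordS k)) (bo (t, ordS (ordS k))).
Proof.
rewrite /star_pos /induced /sarr.
case: (ord3_cases k) => ->; rewrite !ordS_corners !cE;
  by case: (bo (t, _)); case: (bo (t, _)); case: (bo (t, _)).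
Qed.

Definition cyclic3 (a b c : bool) : bool := (a == b) && (b == c).

Lemma tri_branched_sides (bs : 'I_3 -> bool) :
  tri_branched (sarr bs) c0 c1 c2 = ~~ cyclic3 (bs c0) (bs c1) (bs c2).
Proof. by rewrite /tri_branched /induced /sarr !cE; case: (bs _); case: (bs _); case: (bs _). Qed.

Lemma branched_beforeE (bd : 'I_4 -> bool) (d : bool) :
  branched_before bd d = ~~ cyclic3 (bd q0) (bd q1) (~~ d) && ~~ cyclic3 d (bd q2) (bd q3).
Proof.
rewrite /branched_before /tri_branched /induced /qarr_before /bd_arr !qE.
by case: (bd _); case: (bd _); case: (bd _); case: (bd _); case: d.
Qed.

Lemma qarr_before_ext (bd bd' : 'I_4 -> bool) (d : bool) :
  bd =1 bd' -> qarr_before bd d =2 qarr_before bd' d.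
Proof. by move=> bdE i j; rewrite /qarr_before /bd_arr !bdE. Qed.

Lemma qarr_after_ext (bd bd' : 'I_4 -> bool) (d' : bool) :
  bd =1 bd' -> qarr_after bd d' =2 qarr_after bd' d'.
Proof. by move=> bdE i j; rewrite /qarr_after /bd_arr !bdE. Qed.

(* *-sign of the triangle pqr of Q (listed in the positive order of Q),
   read from the arrows a between the vertices of Q. *)
Definition tri_sign (a : rel 'I_4) (p q r : 'I_4) : bool := sign3 (a p q) (a q r) (a r p).

Definition coherent_arrows (a a' : rel 'I_4) : bool :=
  let s := tri_sign a q0 q2 q3 in
  [&& tri_sign a q0 q1 q2 == s, tri_sign a' q0 q1 q3 == s & tri_sign a' q1 q2 q3 == s].

Definition coherent (bd : 'I_4 -> bool) (d d' : bool) : bool :=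
  coherent_arrows (qarr_before bd d) (qarr_after bd d').

Lemma coherent_arrows_ext (a b a' b' : rel 'I_4) :
  a =2 b -> a' =2 b' -> coherent_arrows a a' = coherent_arrows b b'.
Proof. by move=> ab ab'; rewrite /coherent_arrows /tri_sign !ab !ab'. Qed.

Lemma coherentE (bd : 'I_4 -> bool) (d d' : bool) :
  coherent bd d d' =
  let s := sign3 d (bd q2) (bd q3) in
  [&& sign3 (bd q0) (bd q1) (~~ d) == s, sign3 (bd q0) d' (bd q3) == s
    & sign3 (bd q1) (bd q2) (~~ d') == s].
Proof.
rewrite /coherent /coherent_arrows /tri_sign /qarr_before /qarr_after /bd_arr !qE /=.
by case: (bd _); case: (bd _); case: (bd _); case: (bd _); case: d; case: d'.
Qed.

Lemma unique_enhancements_iff_coherent (bd : 'I_4 -> bool) (d d' : bool) :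
  branched_before bd d -> branched_after bd d' ->
  (~~ branched_after bd (~~ d') && ~~ branched_before bd (~~ d)) = coherent bd d d'.
Proof.
rewrite coherentE /branched_before /branched_after /tri_branched /induced /qarr_before
  /qarr_after /bd_arr !qE /=.
by case: (bd _); case: (bd _); case: (bd _); case: (bd _); case: d; case: d'.
Qed.

Lemma unique_bool (P : pred bool) (b : bool) : (forall x, P x -> x = b) <-> ~~ P (~~ b).
Proof.
split=> [uniq_b | not_P x Px]; first by apply/negP => /uniq_b {uniq_b}; case: b.
by apply/eqP; apply: contraNT not_P; case: x Px; case: b.
Qed.

Lemma nonambiguous_iff_coherent (f : bflip) :
  is_bflip f -> non_ambiguous f <-> coherent (fbd f) (fd f) (fd' f).
Proof.
case=> br br'; rewrite -(unique_enhancements_iff_coherent br br').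
rewrite /non_ambiguous /forced /inv_forced.
split=> [[/unique_bool -> /unique_bool ->] // | /andP[/unique_bool fo /unique_bool io]].
by split.
Qed.

Definition skeleton (a : rel 'I_4) : rel 'I_4 := fun i j => a i j || a j i.
Definition square_side (i j : 'I_4) : bool := (j == ordS i) || (i == ordS j).
Definition quad_graph (u v : 'I_4) : rel 'I_4 :=
  fun i j => [|| square_side i j, (i == u) && (j == v) | (i == v) && (j == u)].

Lemma skeleton_before (bd : 'I_4 -> bool) (d : bool) :
  skeleton (qarr_before bd d) =2 quad_graph q0 q2.
Proof.
move=> i j; rewrite /skeleton /qarr_before /bd_arr /quad_graph /square_side.
case: (bd i); case: (bd j); case: d; case: (j == ordS i); case: (i == ordS j);
  by case: (i == q0); case: (i == q2); case: (j == q0); case: (j == q2).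
Qed.

Lemma skeleton_after (bd : 'I_4 -> bool) (d' : bool) :
  skeleton (qarr_after bd d') =2 quad_graph q1 q3.
Proof.
move=> i j; rewrite /skeleton /qarr_after /bd_arr /quad_graph /square_side.
case: (bd i); case: (bd j); case: d'; case: (j == ordS i); case: (i == ordS j);
  by case: (i == q1); case: (i == q3); case: (j == q1); case: (j == q3).
Qed.

Definition vertex_map (p0 p1 p2 p3 : 'I_4) (i : 'I_4) : 'I_4 :=
  match val i with 0 => p0 | 1 => p1 | 2 => p2 | _ => p3 end.

Lemma vertex_map_eta (g : 'I_4 -> 'I_4) : g =1 vertex_map (g q0) (g q1) (g q2) (g q3).
Proof. by move=> i; case: (ord4_cases i) => ->; rewrite !qE. Qed.

(* The identity, the half-turn and the reflections in the two diagonals. *)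
Definition square_symmetry (g : 'I_4 -> 'I_4) : Prop :=
  [\/ g =1 vertex_map q0 q1 q2 q3, g =1 vertex_map q2 q3 q0 q1,
      g =1 vertex_map q0 q3 q2 q1 | g =1 vertex_map q2 q1 q0 q3].

Definition quad_vertices : seq 'I_4 := [:: q0; q1; q2; q3].

Lemma mem_quad_vertices (i : 'I_4) : i \in quad_vertices.
Proof. by case: (ord4_cases i) => ->; rewrite !inE eqxx ?orbT. Qed.

Definition preserves_graphs (g : 'I_4 -> 'I_4) : bool :=
  all (fun i => all (fun j =>
    (quad_graph q0 q2 (g i) (g j) == quad_graph q0 q2 i j) &&
    (quad_graph q1 q3 (g i) (g j) == quad_graph q1 q3 i j)) quad_vertices) quad_vertices.

Lemma graph_automorphisms_check :
  all (fun p0 => all (fun p1 => all (fun p2 => all (fun p3 =>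
    preserves_graphs (vertex_map p0 p1 p2 p3) ==>
    [|| (p0, p1, p2, p3) == (q0, q1, q2, q3), (p0, p1, p2, p3) == (q2, q3, q0, q1),
        (p0, p1, p2, p3) == (q0, q3, q2, q1) | (p0, p1, p2, p3) == (q2, q1, q0, q3)])
    quad_vertices) quad_vertices) quad_vertices) quad_vertices.
Proof. by rewrite /preserves_graphs /quad_graph /square_side /quad_vertices !qE; vm_compute. Qed.

Lemma diagonal_symmetries (g : 'I_4 -> 'I_4) :
  (forall i j, quad_graph q0 q2 (g i) (g j) = quad_graph q0 q2 i j) ->
  (forall i j, quad_graph q1 q3 (g i) (g j) = quad_graph q1 q3 i j) ->
  square_symmetry g.
Proof.
move=> g_before g_after.
have g_pres : preserves_graphs (vertex_map (g q0) (g q1) (g q2) (g q3)).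
  by apply/allP => i _; apply/allP => j _; rewrite -!vertex_map_eta g_before g_after !eqxx.
have := graph_automorphisms_check.
move=> /allP /(_ _ (mem_quad_vertices (g q0))) /allP /(_ _ (mem_quad_vertices (g q1))).
move=> /allP /(_ _ (mem_quad_vertices (g q2))) /allP /(_ _ (mem_quad_vertices (g q3))).
rewrite g_pres /=; case/or4P => /eqP[e0 e1 e2 e3];
  [constructor 1|constructor 2|constructor 3|constructor 4];
  by move=> i; rewrite vertex_map_eta e0 e1 e2 e3.
Qed.

Lemma square_symmetry_involutive (g : 'I_4 -> 'I_4) : square_symmetry g -> involutive g.
Proof. by case=> gE i; rewrite !gE; case: (ord4_cases i) => ->; rewrite !qE. Qed.

Definition pullback (g : 'I_4 -> 'I_4) (a : rel 'I_4) : rel 'I_4 := fun i j => a (g i) (g j).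

(* Square symmetries keep the coherence of a branched quadrilateral: the
   half-turn keeps every sign, a reflection changes every sign. *)
Lemma coherent_symmetric (bd : 'I_4 -> bool) (d d' : bool) (g : 'I_4 -> 'I_4) :
  branched_before bd d -> branched_after bd d' -> square_symmetry g ->
  coherent_arrows (pullback g (qarr_before bd d)) (pullback g (qarr_after bd d'))
  = coherent bd d d'.
Proof.
move=> br br' sym_g.
have sym_ext h : g =1 h ->
    coherent_arrows (pullback g (qarr_before bd d)) (pullback g (qarr_after bd d')) =
    coherent_arrows (pullback h (qarr_before bd d)) (pullback h (qarr_after bd d')).
  by move=> gh; apply: coherent_arrows_ext => i j; rewrite /pullback !gh.
case: sym_g => /sym_ext -> {sym_ext}; move: br br';
  rewrite /coherent /branched_before /branched_after /tri_branched /induced /coherent_arrows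
    /tri_sign /pullback /qarr_before /qarr_after /bd_arr !qE /=;
  by case: (bd _); case: (bd _); case: (bd _); case: (bd _); case: d; case: d'.
Qed.

Lemma coherent_transport (bd bd' : 'I_4 -> bool) (d d' e e' : bool) (phi : 'I_4 -> 'I_4) :
  branched_before bd d -> branched_after bd d' ->
  (forall i j, qarr_before bd d i j = qarr_before bd' e (phi i) (phi j)) ->
  (forall i j, qarr_after bd d' i j = qarr_after bd' e' (phi i) (phi j)) ->
  coherent bd d d' = coherent bd' e e'.
Proof.
move=> br br' phi_before phi_after.
have sym_phi : square_symmetry phi.
  apply: diagonal_symmetries => i j.
    by rewrite -(skeleton_before bd' e) -(skeleton_before bd d) /skeleton !phi_before.
  by rewrite -(skeleton_after bd' e') -(skeleton_after bd d') /skeleton !phi_after.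
have phiK := square_symmetry_involutive sym_phi.
rewrite -(coherent_symmetric br br' sym_phi) /coherent.
by apply: coherent_arrows_ext => i j; rewrite /pullback ?phi_before ?phi_after !phiK.
Qed.

Lemma application_coherent (f : bflip) (T : finType) (opp : T * 'I_3 -> T * 'I_3)
    (bo : T * 'I_3 -> bool) (t1 : T) (k1 : 'I_3) (phi : {perm 'I_4}) (rd' : bool) :
  is_bflip f -> application f opp bo t1 k1 phi rd' ->
  coherent (fbd f) (fd f) (fd' f) = coherent (rbd opp t1 k1 bo) (rd t1 k1 bo) rd'.
Proof. by case=> br br' [_ before after]; apply: coherent_transport before after. Qed.

Section FlipOnSurface.
Variables (T : finType) (opp : T * 'I_3 -> T * 'I_3) (t1 : T) (k1 : 'I_3).
Variable bo : T * 'I_3 -> bool.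
Hypothesis bo_branching : is_branching opp bo.
Hypothesis t1_neq_t2 : t1 != t2 opp t1 k1.

Local Notation t2 := (t2 opp t1 k1).
Local Notation k2 := (k2 opp t1 k1).
Local Notation rbd := (rbd opp t1 k1 bo).
Local Notation rd := (rd t1 k1 bo).

Lemma bo_diagonal_t2 : bo (t2, k2) = ~~ rd.
Proof. by case: bo_branching => bo_opp _; rewrite /t2 /k2 /rd -bo_opp; case: (opp (t1, k1)). Qed.

Lemma t2_neq_t1 : (t2 == t1) = false.
Proof. by rewrite eq_sym (negbTE t1_neq_t2). Qed.

(* t1 = R0 R2 R3 and t2 = R2 R0 R1 before the flip. *)
Lemma star_t1 : star_pos bo t1 = sign3 rd (rbd q2) (rbd q3).
Proof. by rewrite (star_pos_sides bo t1 k1) /rbd /qside !qE. Qed.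

Lemma star_t2 : star_pos bo t2 = sign3 (rbd q0) (rbd q1) (~~ rd).
Proof. by rewrite (star_pos_sides bo t2 k2) bo_diagonal_t2 sign3_rot /rbd /qside !qE. Qed.

(* t1' = R3 R0 R1 and t2' = R1 R2 R3 after the flip. *)
Lemma star_t1_flipped (rd' : bool) :
  star_pos (flip_bo opp t1 k1 bo rd') t1 = sign3 (rbd q0) rd' (rbd q3).
Proof. by rewrite (star_pos_sides _ t1 c0) /flip_bo /= eqxx c0E; apply: sign3_rot. Qed.

Lemma star_t2_flipped (rd' : bool) :
  star_pos (flip_bo opp t1 k1 bo rd') t2 = sign3 (rbd q1) (rbd q2) (~~ rd').
Proof. by rewrite (star_pos_sides _ t2 c0) /flip_bo /= t2_neq_t1 eqxx c0E. Qed.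

Lemma star_outside (rd' : bool) (t : T) :
  t != t1 -> t != t2 -> star_pos (flip_bo opp t1 k1 bo rd') t = star_pos bo t.
Proof.
by move=> t_neq_t1 t_neq_t2; rewrite /star_pos /flip_bo /= (negbTE t_neq_t1) (negbTE t_neq_t2).
Qed.

(* Quarter i of Q lies in t2 or t1 before and in t1' or t2' after the flip,
   so S_+ is kept on every quarter iff the four signs agree. *)
Lemma Splus_preserved_iff (rd' : bool) :
  (forall c, valid_cell opp t1 k1 c -> Splus_T opp t1 k1 bo c = Splus_T' opp t1 k1 bo rd' c)
  <-> coherent rbd rd rd'.
Proof.
rewrite coherentE /=; split=> [pres | coh [t /andP[t_neq_t1 t_neq_t2] | i _]].
- move: (pres (inr q0) isT) (pres (inr q1) isT) (pres (inr q2) isT) (pres (inr q3) isT).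
  rewrite /Splus_T /Splus_T' star_t1 star_t2 star_t1_flipped star_t2_flipped.
  move: (sign3 rd _ _) (sign3 (rbd q0) (rbd q1) _) (sign3 (rbd q0) rd' _) (sign3 (rbd q1) _ _).
  move=> s023 s012 s013 s123; rewrite !qE /= => e0 e1 e2 e3.
  by rewrite e0 -e3 e2 -e1 e0 !eqxx.
- by rewrite /= star_outside.
- rewrite /= star_t1 star_t2 star_t1_flipped star_t2_flipped.
  by case/and3P: coh => /eqP -> /eqP -> /eqP ->; rewrite !if_same.
Qed.
End FlipOnSurface.

Lemma valid_nb (T : finType) (opp : T * 'I_3 -> T * 'I_3) (t1 : T) (k1 : 'I_3)
    (c : cell T) (k : 'I_3) :
  valid_cell opp t1 k1 (nb opp t1 k1 c k).
Proof.
have valid_side s : valid_cell opp t1 k1 (cell_of_side opp t1 k1 s).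
  by rewrite /cell_of_side; case: ifP => // s_t1; case: ifP => //= s_t2; rewrite s_t1 s_t2.
by case: c => [t|i] //=; case: (val k) => [|[|n]].
Qed.

Lemma bnd_ext (T : finType) (opp : T * 'I_3 -> T * 'I_3) (t1 : T) (k1 : 'I_3)
    (R R' : cell T -> bool) :
  (forall c, valid_cell opp t1 k1 c -> R c = R' c) ->
  forall c k, valid_cell opp t1 k1 c -> bnd opp t1 k1 R c k = bnd opp t1 k1 R' c k.
Proof. by move=> RR' c k valid_c; rewrite /bnd !RR' ?valid_nb. Qed.

(* The double of Q: a sphere with four triangles (back, w).  For back = false
   these are the triangles of Q, w = false being t1 = R0 R2 R3 and w = true
   being t2 = R2 R0 R1, whose side 0 is the diagonal; for back = true they
   are their mirror images, glued to them along the sides of Q. *)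
Definition double := (bool * bool)%type.
Definition front_t1 : double := (false, false).

Definition double_opp (s : double * 'I_3) : double * 'I_3 :=
  let: ((back, w), k) := s in
  match back, val k with
  | false, 0 => ((false, ~~ w), c0)
  | false, 1 => ((true, w), c1)
  | false, _ => ((true, w), c0)
  | true, 0 => ((false, w), c2)
  | true, 1 => ((false, w), c1)
  | true, _ => ((true, ~~ w), c2)
  end.

Definition double_bo (bd : 'I_4 -> bool) (e : bool) (s : double * 'I_3) : bool :=
  let: ((back, w), k) := s in
  let: (x0, x1, x2) :=
    match back, w with
    | false, false => (e, bd q2, bd q3)
    | false, true => (~~ e, bd q0, bd q1)
    | true, false => (~~ bd q3, ~~ bd q2, ~~ e)
    | true, true => (~~ bd q1, ~~ bd q0, e)
    end in
  match val k with 0 => x0 | 1 => x1 | _ => x2 end.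

Lemma double_osurface : is_osurface double_opp.
Proof.
split.
- by move=> [[[] []] k]; case: (ord3_cases k) => ->; rewrite /double_opp !cE.
- by move=> [[[] []] k]; case: (ord3_cases k) => ->; rewrite /double_opp !cE.
- set adj := (fun x y => _).
  have step x y k : (double_opp (x, k)).1 = y -> connect adj x y.
    by move=> xky; apply: connect1; apply/existsP; exists k; rewrite xky.
  have to_t1 t : connect adj t front_t1.
    case: t => [[] []]; last exact: connect0.
    + apply: (connect_trans (step (true, true) (true, false) c2 _)); first by rewrite c2E.
      by apply: (step _ _ c0); rewrite c0E.
    + by apply: (step _ _ c0); rewrite c0E.
    + by apply: (step _ _ c0); rewrite c0E.
  have from_t1 t : connect adj front_t1 t.
    case: t => [[] []]; last exact: connect0.
    + apply: (connect_trans (step front_t1 (true, false) c1 _)); first by rewrite c1E.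
      by apply: (step _ _ c2); rewrite c2E.
    + by apply: (step _ _ c1); rewrite c1E.
    + by apply: (step _ _ c0); rewrite c0E.
  by move=> t u; apply: connect_trans (to_t1 t) (from_t1 u).
Qed.

Lemma double_branching (bd : 'I_4 -> bool) (e : bool) :
  branched_before bd e -> is_branching double_opp (double_bo bd e).
Proof.
rewrite branched_beforeE => br; split.
- by move=> [[[] []] k]; case: (ord3_cases k) => ->; rewrite /double_opp /double_bo !cE /= ?negbK.
- move=> t; rewrite tri_branched_sides /double_bo !cE /=; move: br.
  by case: t => [[] []]; case: (bd q0); case: (bd q1); case: (bd q2); case: (bd q3); case: e.
Qed.

Lemma double_t2 : t2 double_opp front_t1 c0 = (false, true).
Proof. by rewrite /t2 /double_opp c0E. Qed.

Lemma double_rbd (bd : 'I_4 -> bool) (e : bool) :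
  rbd double_opp front_t1 c0 (double_bo bd e) =1 bd.
Proof.
move=> i; rewrite /rbd /qside double_t2 /k2 /double_opp c0E /=.
by case: (ord4_cases i) => ->; rewrite /double_bo !qE.
Qed.

Lemma double_application (f : bflip) :
  application f double_opp (double_bo (fbd f) (fd f)) front_t1 c0 1 (fd' f).
Proof.
split; first by rewrite double_t2.
- by move=> i j; rewrite !perm1 (qarr_before_ext _ (double_rbd _ _)) /rd /double_bo c0E.
- by move=> i j; rewrite !perm1 (qarr_after_ext _ (double_rbd _ _)).
Qed.

Theorem proposition2p2 (f : bflip) (Hf : is_bflip f) :
  (non_ambiguous f <->
     sliding f /\
     (forall (T : finType) (opp : T * 'I_3 -> T * 'I_3) (bo : T * 'I_3 -> bool)
             (t1 : T) (k1 : 'I_3) (phi : {perm 'I_4}) (rd' : bool),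
        is_osurface opp -> is_branching opp bo ->
        application f opp bo t1 k1 phi rd' ->
        forall c : cell T, valid_cell opp t1 k1 c ->
          Splus_T opp t1 k1 bo c = Splus_T' opp t1 k1 bo rd' c /\
          Sminus_T opp t1 k1 bo c = Sminus_T' opp t1 k1 bo rd' c))
  /\
  (non_ambiguous f ->
     forall (T : finType) (opp : T * 'I_3 -> T * 'I_3) (bo : T * 'I_3 -> bool)
            (t1 : T) (k1 : 'I_3) (phi : {perm 'I_4}) (rd' : bool),
       is_osurface opp -> is_branching opp bo ->
       application f opp bo t1 k1 phi rd' ->
       forall (c : cell T) (k : 'I_3), valid_cell opp t1 k1 c ->
         bnd opp t1 k1 (Splus_T opp t1 k1 bo) c k
           = bnd opp t1 k1 (Splus_T' opp t1 k1 bo rd') c k /\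
         bnd opp t1 k1 (Sminus_T opp t1 k1 bo) c k
           = bnd opp t1 k1 (Sminus_T' opp t1 k1 bo rd') c k).
Proof.
have preserved (T : finType) opp bo t1 k1 phi rd' :
    non_ambiguous f -> is_branching opp bo -> application f opp bo t1 k1 phi rd' ->
    forall c : cell T, valid_cell opp t1 k1 c ->
      Splus_T opp t1 k1 bo c = Splus_T' opp t1 k1 bo rd' c.
  move=> /(nonambiguous_iff_coherent Hf) coh br app.
  by apply/(Splus_preserved_iff br); [case: app | rewrite -(application_coherent Hf app)].
split; first split.
- move=> na; split; first by left; case: na.
  move=> T opp bo t1 k1 phi rd' _ br app c valid_c.
  by rewrite /Sminus_T /Sminus_T' (preserved _ _ _ _ _ _ _ na br app c valid_c).
- case=> _ pres; apply/(nonambiguous_iff_coherent Hf).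
  have br := double_branching (proj1 Hf); have app := double_application f.
  rewrite (application_coherent Hf app); apply/(Splus_preserved_iff br); first by case: app.
  by move=> c valid_c; case: (pres _ _ _ _ _ _ _ double_osurface br app c valid_c).
- move=> na T opp bo t1 k1 phi rd' _ br app c k valid_c.
  have pres := preserved _ _ _ _ _ _ _ na br app.
  by split; apply: bnd_ext => // c' valid_c'; rewrite /Sminus_T /Sminus_T' ?pres.
Qed.
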